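(* Let $\beta\ge5$ and $\epsilon\in\{1,-1\}$. (a) There is no tight chiral $4$-polytope of type $\{4,2^\beta,8\}$ whose standard generators satisfy $\sigma_2^{-1}\sigma_1=\sigma_1^{-1}\sigma_2^{1+2^{\beta-1}}$ and $\sigma_2\sigma_3^2=\sigma_3^2\sigma_2^{1+\epsilon2^{\beta-2}}$. (b) There is no tight chiral $4$-polytope of type $\{4,2^\beta,2^{\beta-1}\}$ whose standard generators satisfy $\sigma_2^{-1}\sigma_1=\sigma_1^{-1}\sigma_2^{1+2^{\beta-1}}$, $\sigma_3^{-1}\sigma_2=\sigma_2^{3+\epsilon2^{\beta-2}}\sigma_3^{1-2^{\beta-2}}$ and $\sigma_3\sigma_2^{-1}=\sigma_2^{-3+\epsilon2^{\beta-2}}\sigma_3^{-1+2^{\beta-2}}$.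
   Context: For a chiral polytope with base flag $\Phi$, the standard generators $\sigma_1,\sigma_2,\sigma_3$ of its automorphism group are the automorphisms with $\Phi\sigma_i=\Phi^{i(i-1)}$, where $\Phi^j$ is the flag differing from $\Phi$ only in its $j$-face; for type $\{p,q,r\}$ they have orders $p,q,r$ and satisfy $(\sigma_1\sigma_2)^2=(\sigma_2\sigma_3)^2=(\sigma_1\sigma_2\sigma_3)^2=1$. Tight: type $\{p,q,r\}$ with exactly $2pqr$ flags. *)

From mathcomp Require Import all_boot all_order all_algebra all_fingroup.
Set Implicit Arguments. Unset Strict Implicit. Unset Printing Implicit Defensive.

(* A rank-4 abstract polytope is given by a finite carrier T of faces, a
   partial order [le], and a shifted rank function [rk] : rk F = rank F + 1,
   so that rk takes values 0..5 (rank -1 .. 4). *)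
Section Polytope.
Variables (T : finType) (le : rel T) (rk : T -> nat).

Definition ltp (x y : T) : bool := le x y && (x != y).

Definition chainb (A : {set T}) : bool :=
  [forall x in A, forall y in A, le x y || le y x].

Definition flagb (A : {set T}) : bool :=
  chainb A && [forall B : {set T}, ((A \subset B) && chainb B) ==> (B == A)].

(* G is the j-adjacent flag F^j of F (j = rank, 0 <= j <= 3): it differs
   from F exactly in its face of rank j. *)
Definition adjacent (j : nat) (F G : {set T}) : bool :=
  [&& flagb F, flagb G, F != G &
      [set x in F | rk x != j.+1] == [set x in G | rk x != j.+1]].

Definition adjacent_any (F G : {set T}) : bool :=
  [&& flagb F, flagb G & #|F :\: G| == 1%N].

Definition strongly_flag_connected : Prop :=
  forall F G, flagb F -> flagb G ->
    exists s : seq {set T},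
      [/\ path adjacent_any F s, last F s = G &
          all (fun H : {set T} => (F :&: G) \subset H) (F :: s)].

Definition is_polytope4 : Prop :=
  [/\ reflexive le, antisymmetric le & transitive le] /\
  (exists b, forall x, le b x) /\ (exists t, forall x, le x t) /\
  (forall x y, ltp x y -> rk x < rk y)%N /\
  (forall x, rk x < 6)%N /\
  (forall F, flagb F -> forall i, (i < 6)%N -> exists2 x, x \in F & rk x = i) /\
  (forall x y, ltp x y -> rk y = (rk x).+2 ->
       #|[set z | ltp x z && ltp z y]| = 2%N) /\
  strongly_flag_connected.

Definition is_aut (s : {perm T}) : Prop := forall x y, le (s x) (s y) = le x y.

Definition flag_img (s : {perm T}) (F : {set T}) : {set T} := [set s x | x in F].

Definition same_orbit (F G : {set T}) : Prop :=
  exists s : {perm T}, is_aut s /\ flag_img s F = G.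

(* chiral: exactly two flag orbits under Aut, adjacent flags in distinct orbits *)
Definition chiral : Prop :=
  forall (F G H : {set T}) (j : nat), flagb F -> flagb G -> (j < 4)%N ->
    adjacent j F H -> ~ same_orbit F H /\ (same_orbit F G \/ same_orbit H G).

(* sigma_i with base flag Phi: Phi sigma_i = Phi^{i,i-1} = (Phi^i)^{i-1} *)
Definition std_gen (Phi : {set T}) (i : nat) (s : {perm T}) : Prop :=
  is_aut s /\ exists Psi, adjacent i Phi Psi /\ adjacent i.-1 Psi (flag_img s Phi).

Definition tight_chiral4 (p q r : nat) (Phi : {set T}) (s1 s2 s3 : {perm T}) : Prop :=
  [/\ is_polytope4, chiral & flagb Phi] /\
  [/\ std_gen Phi 1 s1, std_gen Phi 2 s2 & std_gen Phi 3 s3] /\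
  [/\ #[s1]%g = p, #[s2]%g = q & #[s3]%g = r] /\
  #|[set F : {set T} | flagb F]| = (2 * p * q * r)%N.

End Polytope.

Definition gpowz (gT : finGroupType) (x : gT) (z : int) : gT :=
  match z with
  | Posz n => (x ^+ n)%g
  | Negz n => ((x ^+ n.+1)^-1)%g
  end.

(* Write a, b, c for the standard generators and 2h for the order of b.  Each of ab, bc
   and abc maps the base flag to a flag reached from it by two commuting adjacency moves,
   so its square fixes the base flag and is trivial by strong flag connectivity.  The
   given relation between a and b says that a^2 conjugates b to b^(1+h); the involution
   ab inverts c and conjugates b to w = b^-1 a^2, and w^2 = b^-(h+2).
   In case (a), conjugating the relation for c^2 by ab shows that c^-2 acts on b and on
   w by explicit powers, hence on a^2 = b w; comparing with c a^2 c^-1 = b^h a^2 gives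
   b^h = 1.  In case (b), the two relations express c b^2 and b^2 c through a power t of
   c; combining the first, conjugated by ab, with the second exhibits b^h = b^2 w^2 as a
   conjugate by t of a power of b^(2h), so again b^h = 1.  Either way the order of b
   is at most h. *)

From Pilot Require Import Defs.
From mathcomp Require Import all_boot all_order all_algebra all_fingroup.
From mathcomp Require Import cyclic zify.
Set Implicit Arguments. Unset Strict Implicit. Unset Printing Implicit Defensive.

Section Polytope4.
Variables (T : finType) (le : rel T) (rk : T -> nat).
Hypothesis polytope : is_polytope4 le rk.
Local Notation flagb := (flagb le).
Local Notation ltp := (ltp le).
Local Notation adjacent := (adjacent le rk).

Lemma le_face_refl : reflexive le.
Proof. by case: polytope => [[]]. Qed.

Lemma ltp_rk x y : ltp x y -> rk x < rk y.
Proof. by case: polytope => _ [_ [_ [H _]]]; exact: H. Qed.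

Lemma rk_lt6 x : rk x < 6.
Proof. by case: polytope => _ [_ [_ [_ [H _]]]]. Qed.

Lemma flag_has_rank F i : flagb F -> i < 6 -> exists2 x, x \in F & rk x = i.
Proof. by case: polytope => _ [_ [_ [_ [_ [H _]]]]] fF; exact: H. Qed.

Lemma diamond x y : ltp x y -> rk y = (rk x).+2 ->
  #|[set z | ltp x z && ltp z y]| = 2.
Proof. by case: polytope => _ [_ [_ [_ [_ [_ [H _]]]]]]; exact: H. Qed.

Lemma flag_connected : strongly_flag_connected le.
Proof. by case: polytope => _ [_ [_ [_ [_ [_ [_ H]]]]]]. Qed.

Lemma flag_comparable F x y : flagb F -> x \in F -> y \in F -> le x y || le y x.
Proof. by case/andP=> /forall_inP chF _ xF yF; exact: (forall_inP (chF x xF) y yF). Qed.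

Lemma flag_rk_inj F x y : flagb F -> x \in F -> y \in F -> rk x = rk y -> x = y.
Proof.
move=> fF xF yF exy; case: (eqVneq x y) => // nxy.
case/orP: (flag_comparable fF xF yF) => H.
- by have := @ltp_rk x y; rewrite /Defs.ltp H nxy exy ltnn => /(_ isT).
- by have := @ltp_rk y x; rewrite /Defs.ltp H eq_sym nxy exy ltnn => /(_ isT).
Qed.

Lemma flag_ltp F x y : flagb F -> x \in F -> y \in F -> rk x < rk y -> ltp x y.
Proof.
move=> fF xF yF lxy; have nxy : x != y by apply: contraTneq lxy => ->; rewrite ltnn.
case/orP: (flag_comparable fF xF yF) => H; first by rewrite /Defs.ltp H nxy.
have := @ltp_rk y x; rewrite /Defs.ltp H eq_sym nxy => /(_ isT).
by rewrite ltnNge ltnW.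
Qed.

Lemma flag_ltpE F x y : flagb F -> x \in F -> y \in F -> (rk x < rk y) = ltp x y.
Proof. by move=> fF xF yF; apply/idP/idP; [exact: flag_ltp fF xF yF | exact: ltp_rk]. Qed.

Lemma flag_mem_of_comparable b F : flagb F -> (forall y, le b y || le y b) -> b \in F.
Proof.
move=> /andP [chF /forallP maxF] cmp_b.
have ch_bF : chainb le (b |: F).
  apply/forall_inP => x; rewrite !inE => /orP [/eqP ->|xF]; apply/forall_inP => y;
    rewrite !inE => /orP [/eqP ->|yF].
  - by rewrite le_face_refl.
  - exact: cmp_b.
  - by rewrite orbC; exact: cmp_b.
  - exact: (forall_inP (forall_inP chF x xF) y yF).
by move/implyP: (maxF (b |: F)); rewrite subsetUr ch_bF => /(_ isT) /eqP <-; rewrite setU11.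
Qed.

Lemma face_in_flag x : exists2 F, flagb F & x \in F.
Proof.
pose P (A : {set T}) := chainb le A && (x \in A).
have P1 : P [set x].
  rewrite /P set11 andbT; apply/forall_inP => y; rewrite inE => /eqP ->.
  by apply/forall_inP => z; rewrite inE => /eqP ->; rewrite le_face_refl.
case: (@arg_maxnP _ [set x] P (fun A => #|A|) P1) => A /andP [chA xA] A_max.
exists A => //; rewrite /Defs.flagb chA /=; apply/forallP => B; apply/implyP.
case/andP=> sAB chB; rewrite eq_sym eqEcard sAB /=; apply: A_max.
by rewrite /P chB (subsetP sAB).
Qed.

Lemma flag_eq_off_rank F G r : flagb F -> flagb G ->
  (forall x, rk x != r -> (x \in F) = (x \in G)) ->
  (forall x, x \in F -> rk x = r -> x \in G) -> F = G.
Proof.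
move=> fF fG off_r at_r; apply/setP => x.
case: (eqVneq (rk x) r) => [ex|nx]; last exact: off_r.
apply/idP/idP => [xF|xG]; first exact: at_r.
have [y yF ey] := flag_has_rank fF (rk_lt6 x).
have yG : y \in G by apply: at_r => //; rewrite ey.
by rewrite (flag_rk_inj fG xG yG (esym ey)).
Qed.

Lemma adjacentP j F G : adjacent j F G <->
  [/\ flagb F, flagb G, F != G &
      forall x, rk x != j.+1 -> (x \in F) = (x \in G)].
Proof.
rewrite /Defs.adjacent; split.
- case/and4P => fF fG nFG /eqP E; split => // x nx.
  by have := congr1 (fun A : {set T} => x \in A) E; rewrite !inE nx !andbT.
- case=> fF fG nFG H; rewrite fF fG nFG /=; apply/eqP/setP => x.
  rewrite !inE; case: (eqVneq (rk x) j.+1) => [_|nx]; first by rewrite !andbF.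
  by rewrite !andbT H.
Qed.

Lemma adjacent_sym j F G : adjacent j F G -> adjacent j G F.
Proof.
case/adjacentP => fF fG nFG H; apply/adjacentP; split => //; first by rewrite eq_sym.
by move=> x /H ->.
Qed.

Lemma diamond_third_eq lo hi f g g' : ltp lo hi -> rk hi = (rk lo).+2 ->
  ltp lo f -> ltp f hi -> ltp lo g -> ltp g hi -> ltp lo g' -> ltp g' hi ->
  f != g -> f != g' -> g = g'.
Proof.
move=> lo_hi rk_hi lo_f f_hi lo_g g_hi lo_g' g'_hi nfg nfg'.
apply/eqP/negP => /negP ngg'.
have sub : f |: [set g; g'] \subset [set z | ltp lo z && ltp z hi].
  by apply/subsetP => z; rewrite !inE => /or3P [] /eqP ->; apply/andP.
have := subset_leq_card sub; rewrite diamond //.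
by rewrite cardsU1 cards2 !inE negb_or nfg nfg' ngg'.
Qed.

Lemma adjacent_faces j F G : j < 4 -> adjacent j F G ->
  exists f g lo hi, [/\ f \in F, g \in G, rk f = j.+1, rk g = j.+1 & f != g] /\
   [/\ lo \in F, hi \in F, lo \in G & hi \in G] /\ (rk lo = j /\ rk hi = j.+2) /\
   [/\ ltp lo f, ltp f hi, ltp lo g & ltp g hi].
Proof.
move=> j_lt4 /adjacentP [fF fG nFG FG].
have [j0 j1 j2] : [/\ j < 6, j.+1 < 6 & j.+2 < 6] by split; lia.
have [f fF' rf] := flag_has_rank fF j1.
have [g gG rg] := flag_has_rank fG j1.
have [lo loF rlo] := flag_has_rank fF j0.
have [hi hiF rhi] := flag_has_rank fF j2.
have loG : lo \in G by rewrite -FG // rlo; lia.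
have hiG : hi \in G by rewrite -FG // rhi; lia.
have nfg : f != g.
  apply: contra nFG => /eqP efg; apply/eqP; apply: (flag_eq_off_rank (r := j.+1)) => //.
  by move=> x xF rx; rewrite (flag_rk_inj fF xF fF' (etrans rx (esym rf))) efg.
exists f, g, lo, hi; split => //; split => //; split => //.
by split; [apply: (flag_ltp fF) | apply: (flag_ltp fF) | apply: (flag_ltp fG)
  | apply: (flag_ltp fG)]; rewrite // ?rlo ?rhi ?rf ?rg.
Qed.

Lemma adjacent_uniq j F G H : j < 4 -> adjacent j F G -> adjacent j F H -> G = H.
Proof.
move=> j_lt4 aG aH; have fF : flagb F by case/adjacentP: aG.
have [f [g [lo [hi [[fF' gG rf rg nfg] [[loF hiF _ _] [[rlo rhi] [lf _ lg gh]]]]]]]] :=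
  adjacent_faces j_lt4 aG.
have [f' [g' [lo' [hi' [[f'F g'H rf' _ nfg'] [[lo'F hi'F _ _] [[rlo' rhi'] [_ f'h lg' g'h]]]]]]]]
  := adjacent_faces j_lt4 aH.
have ef : f' = f by apply: (flag_rk_inj fF); rewrite ?rf ?rf'.
have el : lo' = lo by apply: (flag_rk_inj fF); rewrite ?rlo ?rlo'.
have eh : hi' = hi by apply: (flag_rk_inj fF); rewrite ?rhi ?rhi'.
subst f' lo' hi'.
have lo_hi : ltp lo hi by apply: (flag_ltp fF) => //; rewrite rlo rhi.
have egg' : g = g'.
  by apply: (diamond_third_eq lo_hi _ lf f'h lg gh lg' g'h) => //; rewrite rhi rlo.
case/adjacentP: aG => _ fG _ FG; case/adjacentP: aH => _ fH _ FH.
apply: (flag_eq_off_rank (r := j.+1)) => // [x nx|x xG rx]; first by rewrite -FG // FH.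
by rewrite (flag_rk_inj fG xG gG (etrans rx (esym rg))) egg'.
Qed.

Lemma adjacent_commute i j A B C D : i < 4 -> j < 4 -> (i.+1 < j) || (j.+1 < i) ->
  adjacent i A B -> adjacent j B C -> adjacent j A D -> adjacent i D C.
Proof.
move=> i_lt4 j_lt4 ij aAB aBC aAD.
have [i1 j1] : i.+1 < 6 /\ j.+1 < 6 by split; lia.
have [ne_lo ne_hi ne_j] : [/\ j != i.+1, j.+2 != i.+1 & j.+1 != i.+1] by split; lia.
have [a [d [lo [hi [[aA dD ra rd nad] [[loA hiA _ _] [[rlo rhi] [la ah ld dh]]]]]]]] :=
  adjacent_faces j_lt4 aAD.
case/adjacentP: (aAB) => fA fB nAB AB.
case/adjacentP: (aBC) => _ fC nBC BC.
case/adjacentP: (aAD) => _ fD nAD AD.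
have [c cC rc] := flag_has_rank fC j1.
have loB : lo \in B by rewrite -AB // rlo.
have loC : lo \in C by rewrite -BC // rlo neq_ltn ltnSn.
have hiB : hi \in B by rewrite -AB // rhi.
have hiC : hi \in C by rewrite -BC // rhi neq_ltn ltnSn orbT.
have aB : a \in B by rewrite -AB // ra.
have nac : a != c.
  apply: contra nBC => /eqP eac; apply/eqP.
  apply: (flag_eq_off_rank (r := j.+1)) => // x xB rx.
  by rewrite (flag_rk_inj fB xB aB (etrans rx (esym ra))) eac.
have edc : d = c.
  have lo_hi : ltp lo hi by apply: (flag_ltp fA) => //; rewrite rlo rhi.
  have lo_c : ltp lo c by apply: (flag_ltp fC) => //; rewrite rlo rc.
  have c_hi : ltp c hi by apply: (flag_ltp fC) => //; rewrite rhi rc.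
  by apply: (diamond_third_eq lo_hi _ la ah ld dh lo_c c_hi); rewrite ?rhi ?rlo.
apply/adjacentP; split => //.
  apply: contra nAB => /eqP eDC.
  have [a' a'A ra'] := flag_has_rank fA i1.
  have a'D : a' \in D by rewrite -AD // ra' eq_sym.
  have a'B : a' \in B by rewrite BC -?eDC // ra' eq_sym.
  apply/eqP; apply: (flag_eq_off_rank (r := i.+1)) => // x xA rx.
  by rewrite (flag_rk_inj fA xA a'A (etrans rx (esym ra'))).
move=> x nx; case: (eqVneq (rk x) j.+1) => [ex|nxj].
  apply/idP/idP => xin.
    by rewrite (flag_rk_inj fD xin dD (etrans ex (esym rd))) edc.
  by rewrite (flag_rk_inj fC xin cC (etrans ex (esym rc))) -edc.
by rewrite -AD // AB // BC.
Qed.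

Local Open Scope group_scope.
Implicit Types s t : {perm T}.

Lemma aut_invg s : is_aut le s -> is_aut le s^-1.
Proof. by move=> aut_s x y; rewrite -aut_s !permKV. Qed.

Lemma aut_mulg s t : is_aut le s -> is_aut le t -> is_aut le (s * t).
Proof. by move=> aut_s aut_t x y; rewrite !permM aut_t aut_s. Qed.

Lemma ltp_aut s x y : is_aut le s -> ltp (s x) (s y) = ltp x y.
Proof. by move=> aut_s; rewrite /Defs.ltp aut_s (inj_eq perm_inj). Qed.

Lemma mem_flag_img s F x : (x \in flag_img s F) = (s^-1 x \in F).
Proof.
apply/imsetP/idP => [[y yF ->]|sVx]; first by rewrite permK.
by exists (s^-1 x); rewrite ?permKV.
Qed.

Lemma mem_flag_img_perm s F x : (s x \in flag_img s F) = (x \in F).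
Proof. by rewrite mem_flag_img permK. Qed.

Lemma card_flag_img s (A : {set T}) : #|flag_img s A| = #|A|.
Proof. by rewrite card_imset //; exact: perm_inj. Qed.

Lemma flag_imgM s t F : flag_img (s * t) F = flag_img t (flag_img s F).
Proof. by apply/setP => x; rewrite !mem_flag_img invMg permM. Qed.

Lemma flag_imgK s F : flag_img s (flag_img s^-1 F) = F.
Proof. by apply/setP => x; rewrite -flag_imgM mulVg mem_flag_img invg1 perm1. Qed.

Lemma chainb_img s A : is_aut le s -> chainb le A -> chainb le (flag_img s A).
Proof.
move=> aut_s /forall_inP chA; apply/forall_inP => x; rewrite mem_flag_img => xA.
apply/forall_inP => y; rewrite mem_flag_img => yA.
by have := forall_inP (chA _ xA) _ yA; rewrite -(aut_s (s^-1 x)) -(aut_s (s^-1 y)) !permKV.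
Qed.

Lemma flagb_img s F : is_aut le s -> flagb F -> flagb (flag_img s F).
Proof.
move=> aut_s /andP [chF /forallP maxF]; rewrite /Defs.flagb chainb_img //=.
apply/forallP => B; apply/implyP => /andP [sub chB].
have sub' : F \subset flag_img s^-1 B.
  apply/subsetP => x xF; rewrite mem_flag_img invgK.
  by apply: (subsetP sub); rewrite mem_flag_img_perm.
move/implyP: (maxF (flag_img s^-1 B)); rewrite sub' (chainb_img (aut_invg aut_s) chB).
by move=> /(_ isT) /eqP <-; rewrite flag_imgK.
Qed.

Lemma card_flag_below F x : flagb F -> x \in F -> #|[set y in F | rk y < rk x]| = rk x.
Proof.
move=> fF xF; set S := [set y in F | rk y < rk x]. (* shields [rk x] in [S] from [size_iota] *)
rewrite cardE -(size_map rk) -(size_iota 0 (rk x)); apply: perm_size.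
apply: uniq_perm; first rewrite map_inj_in_uniq ?enum_uniq //.
- move=> y z; rewrite !mem_enum !inE => /andP [yF _] /andP [zF _].
  exact: flag_rk_inj fF yF zF.
- exact: iota_uniq.
move=> r; rewrite mem_iota add0n /=; apply/mapP/idP => [[y]|r_lt].
  by rewrite mem_enum inE => /andP [_ ?] ->.
have [y yF ry] := flag_has_rank fF (ltn_trans r_lt (rk_lt6 x)).
by exists y => //; rewrite mem_enum inE yF ry.
Qed.

Lemma rk_aut s x : is_aut le s -> rk (s x) = rk x.
Proof.
move=> aut_s; have [F fF xF] := face_in_flag x.
have fsF := flagb_img aut_s fF.
have sxF : s x \in flag_img s F by rewrite mem_flag_img_perm.
rewrite -(card_flag_below fsF sxF) -(card_flag_below fF xF).
have -> : [set y in flag_img s F | rk y < rk (s x)] =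
          flag_img s [set y in F | rk (s y) < rk (s x)].
  by apply/setP => z; rewrite !inE !mem_flag_img inE permKV.
rewrite card_flag_img; apply: eq_card => y; rewrite !inE.
case yF : (y \in F) => //=.
by rewrite (flag_ltpE fsF) ?mem_flag_img_perm // (flag_ltpE fF) // ltp_aut.
Qed.

Lemma adjacent_aut s j F G : is_aut le s -> adjacent j F G ->
  adjacent j (flag_img s F) (flag_img s G).
Proof.
move=> aut_s /adjacentP [fF fG nFG FG]; apply/adjacentP; split; try exact: flagb_img.
  apply: contra nFG => /eqP E; apply/eqP.
  by rewrite -(flag_imgK s^-1 F) -(flag_imgK s^-1 G) invgK E.
by move=> x nx; rewrite !mem_flag_img FG // -(rk_aut _ aut_s) permKV.
Qed.

Lemma adjacent_any_adjacent F G : adjacent_any le F G -> exists2 j, j < 4 & adjacent j F G.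
Proof.
case/and3P => fF fG /cards1P [x FG_x].
have FGE y : (y \in F) && (y \notin G) = (y == x) by rewrite andbC -in_setD FG_x inE.
have /andP [xF xG] := etrans (FGE x) (eqxx x).
have FG z : z \in F -> rk z != rk x -> z \in G.
  move=> zF; apply: contraNT => zG.
  by have /eqP -> : z == x by rewrite -FGE zF zG.
have off_x z : rk z != rk x -> (z \in F) = (z \in G).
  move=> nz; apply/idP/idP => [zF|zG]; first exact: FG.
  have [y yF ry] := flag_has_rank fF (rk_lt6 z).
  by rewrite -(flag_rk_inj fG (FG y yF _) zG ry) // ry.
have nFG : F != G by apply: contraNneq xG => <-.
case: polytope => _ [[bot bot_le] [[top le_top] _]].
have bot_mem H : flagb H -> bot \in H.
  by move=> fH; apply: flag_mem_of_comparable => // y; rewrite bot_le.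
have top_mem H : flagb H -> top \in H.
  by move=> fH; apply: flag_mem_of_comparable => // y; rewrite le_top orbT.
have rx_gt0 : 0 < rk x.
  have nbx : bot != x by apply: contraNneq xG => <-; exact: bot_mem.
  have := @ltp_rk bot x; rewrite /Defs.ltp bot_le nbx => /(_ isT).
  exact: leq_ltn_trans (leq0n _).
have rx_lt5 : rk x < 5.
  have nxt : x != top by apply: contraNneq xG => ->; exact: top_mem.
  have := @ltp_rk x top; rewrite /Defs.ltp le_top nxt => /(_ isT).
  by move/leq_trans; apply; rewrite -ltnS rk_lt6.
exists (rk x).-1; first by rewrite -ltnS prednK.
by apply/adjacentP; split => // z; rewrite prednK //; exact: off_x.
Qed.

Lemma aut_fixing_flag_eq1 s F : is_aut le s -> flagb F -> flag_img s F = F -> s = 1.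
Proof.
move=> aut_s fF sF.
have fix_all G : flagb G -> flag_img s G = G.
  move=> fG; have [p [Fp Gp _]] := flag_connected fF fG.
  elim: p F fF sF Fp Gp => [|H p IH] F' fF' sF' /=; first by move=> _ <-.
  case/andP => aFH Hp Gp.
  have [j j_lt4 aj] := adjacent_any_adjacent aFH.
  have sH : flag_img s H = H.
    by apply: (adjacent_uniq j_lt4 _ aj); rewrite -{1}sF'; exact: adjacent_aut.
  by case/adjacentP: aj => _ fH _ _; exact: (IH H).
apply/permP => x; rewrite perm1.
have [G fG xG] := face_in_flag x.
apply: (flag_rk_inj fG _ xG (rk_aut _ aut_s)).
by rewrite -(fix_all G fG) mem_flag_img_perm.
Qed.

Lemma aut_sqr_eq1_of_adjacent2 g Phi P i j : i < 4 -> j < 4 -> (i.+1 < j) || (j.+1 < i) ->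
  is_aut le g -> flagb Phi -> adjacent i Phi P -> adjacent j P (flag_img g Phi) ->
  g ^+ 2 = 1.
Proof.
move=> i_lt4 j_lt4 ij aut_g fPhi aP aPg.
(* [Phi g = Phi^(i,j)]; as the two moves commute, [P g = Phi^j], so [Phi g^2 = Phi]. *)
have ji : (j.+1 < i) || (i.+1 < j) by rewrite orbC.
have aPhi : adjacent j (flag_img g P) Phi.
  exact: adjacent_commute j_lt4 i_lt4 ji (adjacent_sym aPg) (adjacent_sym aP)
    (adjacent_aut aut_g aP).
have gP := adjacent_uniq j_lt4 aPhi (adjacent_aut aut_g aPg).
apply: (aut_fixing_flag_eq1 (F := Phi)) => //; first by rewrite expg2; exact: aut_mulg.
by rewrite expg2 flag_imgM -gP.
Qed.

Lemma std_gen_img_adjacent Phi a s Q : a.-1 < 4 ->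
  std_gen le rk Phi a s -> adjacent a.-1 Phi Q -> adjacent a Phi (flag_img s Q).
Proof.
move=> a_lt5 [aut_s [Psi [aPsi aPsi_s]]] aQ.
suff -> : flag_img s Q = Psi by [].
exact: adjacent_uniq a_lt5 (adjacent_aut aut_s aQ) (adjacent_sym aPsi_s).
Qed.

Lemma std_gen_involutions Phi s1 s2 s3 : flagb Phi ->
  std_gen le rk Phi 1 s1 -> std_gen le rk Phi 2 s2 -> std_gen le rk Phi 3 s3 ->
  [/\ (s1 * s2) ^+ 2 = 1, (s2 * s3) ^+ 2 = 1 & (s1 * s2 * s3) ^+ 2 = 1].
Proof.
move=> fPhi g1 g2 g3.
case: (g1) => aut1 [P1 [a1 a0]]; case: (g2) => aut2 [P2 [a2 a1']]; case: (g3) => aut3 _.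
have a2P1 := std_gen_img_adjacent (a := 2) isT g2 a1.
have a3P2 := std_gen_img_adjacent (a := 3) isT g3 a2.
have a3P1 := std_gen_img_adjacent (a := 3) isT g3 a2P1.
have a0P1 : adjacent 0 (flag_img s2 P1) (flag_img (s1 * s2) Phi).
  by rewrite flag_imgM; exact: adjacent_aut.
have a1P2 : adjacent 1 (flag_img s3 P2) (flag_img (s2 * s3) Phi).
  by rewrite flag_imgM; exact: adjacent_aut.
have a0P1' : adjacent 0 (flag_img s3 (flag_img s2 P1)) (flag_img (s1 * s2 * s3) Phi).
  by rewrite flag_imgM; exact: adjacent_aut.
split.
- exact: aut_sqr_eq1_of_adjacent2 _ _ _ (aut_mulg aut1 aut2) fPhi a2P1 a0P1.
- exact: aut_sqr_eq1_of_adjacent2 _ _ _ (aut_mulg aut2 aut3) fPhi a3P2 a1P2.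
- exact: aut_sqr_eq1_of_adjacent2 _ _ _ (aut_mulg (aut_mulg aut1 aut2) aut3) fPhi a3P1 a0P1'.
Qed.

End Polytope4.

Section GroupFacts.
Local Open Scope group_scope.
Variable gT : finGroupType.
Implicit Types x y : gT.

Lemma invg_of_sqr_eq1 x : x ^+ 2 = 1 -> x^-1 = x.
Proof. by move=> x2; apply: mulg1_eq; rewrite -expg2. Qed.

Lemma mulg_sandwich_of_sqr_eq1 x y : (x * y) ^+ 2 = 1 -> x * y * x = y^-1.
Proof. by rewrite expg2 mulgA => xy2; apply/eqP; rewrite -mulg_eq1 xy2. Qed.

Lemma expg_eq1_dvd x m n : x ^+ m = 1 -> (m %| n)%N -> x ^+ n = 1.
Proof. by move=> xm /dvdnP [k ->]; rewrite mulnC expgM xm expg1n. Qed.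

Lemma expg_half_order_neq1 x h :
  #[x] = (2 * h)%N -> (0 < h)%N -> x ^+ h != 1.
Proof. by rewrite -order_dvdn => -> h_gt0; apply/negP => /dvdn_leq; lia. Qed.

Lemma gpowz_eq_mod x (N n : nat) (z : int) :
  x ^+ N = 1 -> (z = n %[mod N])%Z -> gpowz x z = x ^+ n.
Proof.
move=> xN; case: z => m /=.
  by rewrite !modz_nat => -[mn]; rewrite -(expg_mod m xN) mn expg_mod.
move/eqP; rewrite eq_sym eqz_mod_dvd (_ : (n%:Z - Negz m)%R = (n + m.+1)%N); last first.
  by rewrite NegzE; lia.
rewrite dvdzE /= => dvd_N; apply: mulg1_eq.
by rewrite -expgD addnC (expg_eq1_dvd xN).
Qed.

End GroupFacts.

Section GeneratorRelations.
Local Open Scope group_scope.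
Variables (gT : finGroupType) (a b c : gT) (h : nat).
Hypotheses (b_2h : b ^+ (2 * h) = 1) (a_4 : a ^+ 4 = 1).
Hypotheses (ab_invol : (a * b) ^+ 2 = 1) (bc_invol : (b * c) ^+ 2 = 1).
Hypothesis abc_invol : (a * b * c) ^+ 2 = 1.
Hypothesis ba_rel : b^-1 * a = a^-1 * b ^+ h.+1.

Local Notation w := (b^-1 * (a * a)).

Lemma a2V : (a * a)^-1 = a * a.
Proof. by apply: invg_of_sqr_eq1; rewrite -expg2 -expgM. Qed.

Lemma aba : a * b * a = b^-1.
Proof. exact: mulg_sandwich_of_sqr_eq1. Qed.

Lemma bab : b * a * b = a^-1.
Proof. by rewrite -(mulKg a (b * a * b)) !(mulgA a) aba mulVg mulg1. Qed.

Lemma a2_conj_b : b ^ (a * a) = b ^+ h.+1.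
Proof.
by rewrite conjgE a2V -(mulKVg a (b ^+ _)) -ba_rel -aba !mulgA.
Qed.

Lemma a2_conj_bX n : (b ^+ n) ^ (a * a) = b ^+ (n * h.+1).
Proof. by rewrite conjXg a2_conj_b -expgM mulnC. Qed.

Lemma a2_conj_b2X n : (b ^+ (2 * n)) ^ (a * a) = b ^+ (2 * n).
Proof.
rewrite a2_conj_bX (_ : (2 * n * h.+1 = 2 * n + 2 * h * n)%N); last by lia.
by rewrite expgD (expgM b (2 * h)) b_2h expg1n mulg1.
Qed.

Lemma ab_conj_b : b ^ (a * b) = w.
Proof.
by rewrite conjgE invMg -mulgA (mulgA b a b) bab -invMg a2V.
Qed.

Lemma ab_conj_c : c ^ (a * b) = c^-1.
Proof.
rewrite conjgE (invg_of_sqr_eq1 ab_invol); apply/eqP.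
by rewrite -mulg_eq1 !mulgA -abc_invol expg2 !mulgA.
Qed.

Lemma w2 : w ^+ 2 = (b ^+ h.+2)^-1.
Proof.
rewrite expg2 -mulgA -{1}a2V -conjgE conjVg a2_conj_b -invMg.
by rewrite -expgSr.
Qed.

Lemma w_4X s : w ^+ (4 * s) = (b ^+ (4 * s))^-1.
Proof.
have -> : (4 * s = 2 * (2 * s))%N by lia.
rewrite expgM w2 expVgn -expgM.
rewrite (_ : (h.+2 * (2 * s) = 2 * (2 * s) + 2 * h * s)%N); last by lia.
by rewrite expgD (expgM b (2 * h)) b_2h expg1n mulg1.
Qed.

Lemma bc_conj_a : a ^ (b * c) = a^-1.
Proof.
rewrite conjgE (invg_of_sqr_eq1 bc_invol); apply/esym/eqP.
by rewrite eq_invg_mul !mulgA -abc_invol expg2 !mulgA.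
Qed.

Lemma bc_conj_a2 : (a * a) ^ (b * c) = a * a.
Proof. by rewrite conjMg bc_conj_a -invMg a2V. Qed.

Lemma cV_conj_a2 : (a * a) ^ c^-1 = b ^+ h * (a * a).
Proof.
have -> : c^-1 = (b * c)^-1 * b by rewrite invMg mulgKV.
rewrite conjgM (invg_of_sqr_eq1 bc_invol) bc_conj_a2.
rewrite conjgE (conjgCV (a * a) b) a2V a2_conj_b.
by rewrite expgS -mulgA mulKg.
Qed.

Lemma expg_half_eq1_of_c2_rel s :
  b * c ^+ 2 = c ^+ 2 * b ^+ (4 * s).+1 ->
  (((4 * s).+1 + h) * (4 * s).+1 = 1 %[mod 2 * h])%N -> b ^+ h = 1.
Proof.
set k := (4 * s).+1 => bc2 k_inv.
have b_c2 : b ^ (c ^+ 2) = b ^+ k by rewrite conjgE bc2 mulKg.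
have b_c2V : b ^ (c ^+ 2)^-1 = b ^+ (k + h).
  apply: (canLR (conjgK _)); rewrite conjXg b_c2 -expgM mulnC.
  by rewrite -(expg_mod _ b_2h) k_inv expg_mod.
have w_c2V : w ^ (c ^+ 2)^-1 = w ^+ k.
  have ab_c2 : c ^+ 2 * (a * b) = a * b * (c ^+ 2)^-1.
    by rewrite conjgC conjXg ab_conj_c expVgn.
  by rewrite -ab_conj_b -conjgM -ab_c2 conjgM b_c2 conjXg.
have a2_b4X : a * a * (b ^+ (4 * s))^-1 = (b ^+ (4 * s))^-1 * (a * a).
  have -> : (4 * s = 2 * (2 * s))%N by lia.
  by rewrite (conjgCV (a * a)) a2V conjVg a2_conj_b2X.
have a2_c2V : (a * a) ^ (c ^+ 2)^-1 = b ^+ h * (a * a).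
  rewrite -{1}(mulKVg b (a * a)) conjMg b_c2V w_c2V /k (expgS w) w_4X.
  rewrite -mulgA a2_b4X (mulgA b^-1) mulgA; congr (_ * (a * a)).
  by rewrite -invMg -expgSr -/k addnC expgD mulgK.
have : (a * a) ^ (c ^+ 2)^-1 = (b ^+ h) ^ c^-1 * (b ^+ h * (a * a)).
  by rewrite -expVgn expg2 conjgM cV_conj_a2 (conjMg (b ^+ h)) cV_conj_a2.
rewrite a2_c2V => /esym/(canRL (mulgK _)); rewrite mulgV => /eqP.
by rewrite conjg_eq1 => /eqP.
Qed.

Lemma expg_half_eq1_of_c_rels i j l l' :
  c^-1 * b = b ^+ (2 * i).+1 * c ^+ l ->
  c * b^-1 = b ^+ j * c ^+ l' -> c ^+ (l + l') = 1 ->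
  (2 * h %| j.+1 + h.+2 * i)%N -> b ^+ h = 1.
Proof.
move=> cVb cbV cll' dvd_h.
have cV : c^-1 = b * c * b by rewrite mulg_sandwich_of_sqr_eq1.
have cl'V : (c ^+ l')^-1 = c ^+ l.
  by apply/eqP; rewrite eq_invg_mul -expgD addnC cll'.
have cb2 : c * b ^+ 2 = b ^+ 2 ^+ i * c ^+ l.
  by apply: (mulgI b); rewrite -expgM expg2 !mulgA -cV cVb expgS.
have b2c : b ^+ 2 * c = c ^+ l * (b ^+ j.+1)^-1.
  have := congr1 (fun x => x^-1) cbV; rewrite /= !invMg invgK cl'V cV !mulgA => E.
  by apply: (mulIg b); rewrite expg2 expgS invMg !mulgA mulgKV E.
have cVw2 : c^-1 * w ^+ 2 = w ^+ 2 ^+ i * (c ^+ l)^-1.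
  have := congr1 (conjg^~ (a * b)) cb2.
  by rewrite /= !conjMg !conjXg ab_conj_c ab_conj_b expVgn.
have b2w2 : b ^+ 2 * w ^+ 2 = b ^+ h.
  rewrite w2 -(addn2 h) expgD invMg mulKVg invg_of_sqr_eq1 //.
  by rewrite -expgM mulnC.
rewrite -b2w2 -(mulgK c (b ^+ 2)) b2c -mulgA cVw2 w2 expVgn -expgM.
rewrite mulgA -(mulgA (c ^+ l)) -invMg -expgD addnC (expg_eq1_dvd b_2h dvd_h).
by rewrite invg1 mulg1 mulgV.
Qed.

End GeneratorRelations.

Lemma tight_chiral4_relations (T : finType) (le : rel T) (rk : T -> nat) p q r Phi
    (s1 s2 s3 : {perm T}) :
  tight_chiral4 le rk p q r Phi s1 s2 s3 ->
  [/\ #[s1]%g = p, #[s2]%g = q & #[s3]%g = r] /\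
  [/\ ((s1 * s2) ^+ 2 = 1)%g, ((s2 * s3) ^+ 2 = 1)%g & ((s1 * s2 * s3) ^+ 2 = 1)%g].
Proof.
case=> [[polytope _ fPhi] [[g1 g2 g3] [ord _]]]; split => //.
exact (std_gen_involutions polytope fPhi g1 g2 g3).
Qed.

Lemma sign_mul_mod4 (eps : int) (q : nat) : eps = 1%R \/ eps = (-1)%R ->
  exists f, forall z : int,
    (z + eps * q%:Z = z + ((2 * f).+1 * q)%N %[mod (4 * q)%N])%Z.
Proof.
case=> ->; [exists 0%N | exists 1%N] => z; first by rewrite GRing.mul1r mul1n.
rewrite -[RHS](modzMDl (-1)); congr (_ %% _)%Z; lia.
Qed.

Lemma pow2_split beta : (5 <= beta)%N -> exists2 p, (2 <= p)%N &
  [/\ 2 ^ beta = 16 * p, 2 ^ (beta - 1) = 8 * p & 2 ^ (beta - 2) = 4 * p]%N.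
Proof.
move=> beta_ge5; have [k ->] : exists k, beta = (k + 5)%N by exists (beta - 5)%N; lia.
exists (2 ^ k.+1); first by rewrite expnS; have := expn_gt0 2 k; lia.
have -> : (k + 5 - 1 = k.+1 + 3)%N by lia.
have -> : (k + 5 - 2 = k.+1 + 2)%N by lia.
have -> : (k + 5 = k.+1 + 4)%N by lia.
by rewrite !expnD; split; lia.
Qed.

Section NoTightChiral.
Local Open Scope group_scope.
Variables (T : finType) (le : rel T) (rk : T -> nat) (Phi : {set T}) (s1 s2 s3 : {perm T}).
Variables (p f : nat) (eps : int).
Hypothesis p_ge2 : (2 <= p)%N.
Hypothesis eps_odd :
  forall z : int, (z + eps * (4 * p)%:Z = z + ((2 * f).+1 * (4 * p))%N %[mod (16 * p)%N])%Z.
Hypothesis s12_rel : s2^-1 * s1 = s1^-1 * gpowz s2 (1 + (8 * p)%:Z)%R.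
Local Notation e := (2 * f).+1.

Lemma no_tight_chiral_c2_rel :
  tight_chiral4 le rk 4 (16 * p) 8 Phi s1 s2 s3 ->
  s2 * s3 ^+ 2 = s3 ^+ 2 * gpowz s2 (1 + eps * (4 * p)%:Z)%R -> False.
Proof.
move=> /tight_chiral4_relations [[a_ord b_ord _] [ab bc abc]] c2_rel.
have b_16p : s2 ^+ (16 * p) = 1 by rewrite -b_ord expg_order.
have bh_neq1 : s2 ^+ (8 * p) != 1.
  by apply: expg_half_order_neq1; [rewrite b_ord; lia | lia].
apply: (negP bh_neq1); apply/eqP.
apply: (@expg_half_eq1_of_c2_rel _ s1 s2 s3 _ _ _ ab bc abc s12_rel (e * p)).
- by rewrite mulnA.
- by rewrite -a_ord expg_order.
- rewrite c2_rel (gpowz_eq_mod (n := (4 * (e * p)).+1) b_16p) //.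
  by rewrite eps_odd; congr (_ %% _)%Z; lia.
- (* (4ep + 1 + 8p)(4ep + 1) = 1 + 8p(e + 1) + 16p(e^2 p + 2ep), and e + 1 = 2(f + 1) *)
  rewrite -[RHS](modnMDl (f + 1 + e * e * p + 2 * e * p)); congr (_ %% _)%N; nia.
Qed.

Lemma no_tight_chiral_c_rels :
  tight_chiral4 le rk 4 (16 * p) (8 * p) Phi s1 s2 s3 ->
  s3^-1 * s2 = gpowz s2 (3 + eps * (4 * p)%:Z)%R * gpowz s3 (1 - (4 * p)%:Z)%R ->
  s3 * s2^-1 = gpowz s2 (-3 + eps * (4 * p)%:Z)%R * gpowz s3 (-1 + (4 * p)%:Z)%R ->
  False.
Proof.
move=> /tight_chiral4_relations [[a_ord b_ord c_ord] [ab bc abc]] c1_rel c2_rel.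
have b_16p : s2 ^+ (16 * p) = 1 by rewrite -b_ord expg_order.
have c_8p : s3 ^+ (8 * p) = 1 by rewrite -c_ord expg_order.
have bh_neq1 : s2 ^+ (8 * p) != 1.
  by apply: expg_half_order_neq1; [rewrite b_ord; lia | lia].
apply: (negP bh_neq1); apply/eqP.
apply: (@expg_half_eq1_of_c_rels _ s1 s2 s3 _ _ _ ab bc abc s12_rel
  (1 + 2 * (e * p)) (4 * (e * p) - 3) (4 * p + 1) (4 * p - 1)).
- by rewrite mulnA.
- by rewrite -a_ord expg_order.
- rewrite c1_rel (gpowz_eq_mod (n := (2 * (1 + 2 * (e * p))).+1) b_16p).
    rewrite (gpowz_eq_mod (n := 4 * p + 1) c_8p) //.
    by rewrite -[RHS](modzMDl (-1)); congr (_ %% _)%Z; lia.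
  by rewrite eps_odd; congr (_ %% _)%Z; nia.
- rewrite c2_rel (gpowz_eq_mod (n := 4 * (e * p) - 3) b_16p).
    by rewrite (gpowz_eq_mod (n := 4 * p - 1) c_8p) //; congr (_ %% _)%Z; lia.
  by rewrite eps_odd; congr (_ %% _)%Z; nia.
- by rewrite (_ : (4 * p + 1 + (4 * p - 1) = 8 * p)%N) //; lia.
- (* (4ep - 3) + 1 + (8p + 2)(1 + 2ep) = 8p(e + 1) + 16ep^2 *)
  by apply/dvdnP; exists (f + 1 + e * p); nia.
Qed.

End NoTightChiral.

Theorem theorem5p11 (beta : nat) (eps : int) :
  (5 <= beta)%N -> (eps = 1%R \/ eps = (-1)%R) ->
  (~ exists (T : finType) (le : rel T) (rk : T -> nat) (Phi : {set T})
            (s1 s2 s3 : {perm T}),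
       [/\ tight_chiral4 le rk 4 (2 ^ beta) 8 Phi s1 s2 s3,
           (s2^-1 * s1 = s1^-1 * gpowz s2 (1 + (2 ^ (beta - 1))%:Z)%R)%g &
           (s2 * s3 ^+ 2 = s3 ^+ 2 * gpowz s2 (1 + eps * (2 ^ (beta - 2))%:Z)%R)%g])
  /\
  (~ exists (T : finType) (le : rel T) (rk : T -> nat) (Phi : {set T})
            (s1 s2 s3 : {perm T}),
       [/\ tight_chiral4 le rk 4 (2 ^ beta) (2 ^ (beta - 1)) Phi s1 s2 s3,
           (s2^-1 * s1 = s1^-1 * gpowz s2 (1 + (2 ^ (beta - 1))%:Z)%R)%g,
           (s3^-1 * s2 = gpowz s2 (3 + eps * (2 ^ (beta - 2))%:Z)%R
                         * gpowz s3 (1 - (2 ^ (beta - 2))%:Z)%R)%g &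
           (s3 * s2^-1 = gpowz s2 (-3 + eps * (2 ^ (beta - 2))%:Z)%R
                         * gpowz s3 (-1 + (2 ^ (beta - 2))%:Z)%R)%g]).
Proof.
move=> beta_ge5 eps_pm; have [p p_ge2 [-> -> ->]] := pow2_split beta_ge5.
have [f eps_odd] := sign_mul_mod4 (4 * p) eps_pm.
rewrite (_ : (4 * (4 * p) = 16 * p)%N) in eps_odd; last by lia.
split=> [[T [le [rk [Phi [s1 [s2 [s3 [tc s12_rel c2_rel]]]]]]]]
        |[T [le [rk [Phi [s1 [s2 [s3 [tc s12_rel c1_rel c2_rel]]]]]]]]].
- exact: no_tight_chiral_c2_rel p_ge2 eps_odd s12_rel tc c2_rel.
- exact: no_tight_chiral_c_rels p_ge2 eps_odd s12_rel tc c1_rel c2_rel.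
Qed.
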